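(* Let $(S,+)$ be a commutative semigroup, let $A\subseteq S$ be a $\mathcal{CR}$-set in $(S,+)$, and let $l\in\mathbb{N}$. Then the set $$\{(a,b)\in S\times S:\ \{a,a+b,a+2b,\ldots,a+lb\}\subseteq A\}$$ is a $\mathcal{CR}$-set in the semigroup $(S\times S,+)$ (with coordinatewise addition).
   Context: For a commutative semigroup $(S,+)$ and $r,n\in\mathbb{N}$, let $S^{r\times n}$ denote the set of $r\times n$ matrices with entries in $S$. For $M=(M_{ij})\in S^{r\times n}$ and a non-empty $\alpha\subseteq\{1,\ldots,r\}$, write $M_{\alpha j}=\sum_{i\in\alpha}M_{ij}$. A subset $A\subseteq S$ is a $\mathcal{CR}$-set (combinatorially rich set) if for every $n\in\mathbb{N}$ there exists $r\in\mathbb{N}$ such that for every $M\in S^{r\times n}$ there exist a non-empty set $\alpha\subseteq\{1,\ldots,r\}$ and $s\in S$ with $s+M_{\alpha j}\in A$ for all $j\in\{1,\ldots,n\}$. For $k\in\mathbb{N}$ and $b\in S$, $kb$ denotes $b+\cdots+b$ ($k$ times). *)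

From mathcomp Require Import all_boot.
Set Implicit Arguments. Unset Strict Implicit. Unset Printing Implicit Defensive.

Definition associative_op (S : Type) (op : S -> S -> S) :=
  forall x y z, op x (op y z) = op (op x y) z.
Definition commutative_op (S : Type) (op : S -> S -> S) :=
  forall x y, op x y = op y x.

(* M_{alpha j} = sum_{i in alpha} M i j, defined for nonempty alpha
   (None only when alpha is empty). *)
Definition col_subsum (S : Type) (op : S -> S -> S) (r n : nat)
  (M : 'I_r -> 'I_n -> S) (alpha : {set 'I_r}) (j : 'I_n) : option S :=
  foldr (fun i acc => Some (match acc with
                            | None => M i j
                            | Some v => op (M i j) v end))
        None (enum alpha).

(* CR-sets (combinatorially rich sets); N = {1,2,...}. *)
Definition CR_set (S : Type) (op : S -> S -> S) (A : S -> Prop) : Prop :=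
  forall n : nat, 0 < n ->
  exists r : nat, 0 < r /\
  forall M : 'I_r -> 'I_n -> S,
  exists alpha : {set 'I_r}, alpha != set0 /\
  exists s : S, forall j : 'I_n,
    match col_subsum op M alpha j with
    | Some v => A (op s v)
    | None => False
    end.

(* k b = b + ... + b (k times), for k >= 1 *)
Definition nmul (S : Type) (op : S -> S -> S) (k : nat) (b : S) : S :=
  iter k.-1 (op b) b.

Definition prod_op (S : Type) (op : S -> S -> S) (x y : S * S) : S * S :=
  (op x.1 y.1, op x.2 y.2).

Definition AP_pairs (S : Type) (op : S -> S -> S) (A : S -> Prop) (l : nat)
  (p : S * S) : Prop :=
  A p.1 /\ forall k : nat, 1 <= k <= l -> A (op p.1 (nmul op k p.2)).

From mathcomp Require Import all_boot.
Set Implicit Arguments. Unset Strict Implicit. Unset Printing Implicit Defensive.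

(* Write a + k b for the k-th term of the progression of a pair (a, b); it is
   additive in (a, b).  Given M, apply the CR property of A to the matrix whose
   entry at row i and column (j, k), k <= l, is the k-th term of c + M i j.
   Summing over alpha and translating by s then gives, for all k <= l at once,
   the k-th term of (s + sum c.1, sum c.2) + sum M.  The fixed pair c is added
   only because S may lack an identity: sum c.2 is the second coordinate of
   the translating pair. *)

Section OptionSum.
Variables (T I : Type) (op : T -> T -> T).

Definition osum (F : I -> T) (s : seq I) : option T :=
  foldr (fun i acc => Some (match acc with
                            | None => F i
                            | Some v => op (F i) v end))
        None s.

Lemma eq_osum (F G : I -> T) s : F =1 G -> osum F s = osum G s.
Proof. by move=> eqFG; elim: s => //= i s ->; rewrite eqFG. Qed.

Lemma osum_nonempty (F : I -> T) s : 0 < size s -> exists v, osum F s = Some v.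
Proof. by case: s => // i s _; eexists. Qed.

End OptionSum.

Lemma col_subsumE (T : Type) (op : T -> T -> T) r n (M : 'I_r -> 'I_n -> T) alpha j :
  col_subsum op M alpha j = osum op (M^~ j) (enum alpha).
Proof. by []. Qed.

Lemma osum_morph (T U I : Type) (opT : T -> T -> T) (opU : U -> U -> U)
    (f : T -> U) (F : I -> T) s :
  {morph f : x y / opT x y >-> opU x y} ->
  osum opU (fun i => f (F i)) s = omap f (osum opT F s).
Proof.
move=> fM; elim: s => [|i s IHs] //=; rewrite IHs.
by case: (osum opT F s) => //= v; rewrite fM.
Qed.

Section CommutativeSemigroup.
Variables (S : Type) (op : S -> S -> S).
Hypotheses (opA : associative_op op) (opC : commutative_op op).

Lemma opACA a b c d : op (op a b) (op c d) = op (op a c) (op b d).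
Proof. by rewrite -!opA (opA b) (opC b) -opA. Qed.

Lemma osumD I (F G : I -> S) s a b :
  osum op F s = Some a -> osum op G s = Some b ->
  osum op (fun i => op (F i) (G i)) s = Some (op a b).
Proof.
elim: s a b => // i s IHs a b /=.
case eF: (osum op F s) => [a'|]; case eG: (osum op G s) => [b'|] [<-] [<-];
  first by rewrite (IHs _ _ eF eG) opACA.
all: by case: s eF eG {IHs}.
Qed.

Lemma prod_opA : associative_op (prod_op op).
Proof. by move=> x y z; rewrite /prod_op /= !opA. Qed.

Lemma prod_opC : commutative_op (prod_op op).
Proof. by move=> x y; rewrite /prod_op opC (opC x.2). Qed.

Definition ap_term (p : S * S) (k : nat) : S := iter k (op p.2) p.1.

Lemma ap_termD k : {morph ap_term^~ k : p q / prod_op op p q >-> op p q}.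
Proof. by move=> p q; elim: k => //= k ->; rewrite opACA. Qed.

Lemma ap_term_shift x p k : op x (ap_term p k) = ap_term (op x p.1, p.2) k.
Proof. by elim: k => //= k <-; rewrite opA (opC x) opA. Qed.

Lemma ap_term_nmul p k : 0 < k -> ap_term p k = op p.1 (nmul op k p.2).
Proof.
case: k => // k _; rewrite /ap_term /nmul /=.
by elim: k => [|k IHk] /=; [exact: opC | rewrite IHk opA (opC p.2) opA].
Qed.

Lemma AP_pairsE (A : S -> Prop) l p :
  AP_pairs op A l p <-> forall k, k <= l -> A (ap_term p k).
Proof.
split=> [[A0 Ak] [|k] kl|Ak]; first exact: A0.
- by rewrite ap_term_nmul //; apply: Ak.
- split=> [|k /andP[k_gt0 kl]]; first exact: (Ak 0).
  by rewrite -ap_term_nmul //; apply: Ak.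
Qed.

End CommutativeSemigroup.

Theorem theorem8 (S : Type) (op : S -> S -> S)
  (opA : associative_op op) (opC : commutative_op op)
  (A : S -> Prop) (hA : CR_set op A) (l : nat) (hl : 0 < l) :
  CR_set (prod_op op) (AP_pairs op A l).
Proof.
move=> n n_gt0; pose T := ('I_n * 'I_l.+1)%type.
have T_gt0 : 0 < #|{: T}| by rewrite card_prod !card_ord muln_gt0 n_gt0.
have [r [r_gt0 CR_A]] := hA _ T_gt0.
exists r; split=> // M.
pose c := M (Ordinal r_gt0) (Ordinal n_gt0).
pose N i (t : 'I_#|{: T}|) := let: (j, k) := enum_val t in ap_term op (prod_op op c (M i j)) k.
have [alpha [alpha_neq0 [s As]]] := CR_A N.
have enum_gt0 : 0 < size (enum alpha) by rewrite -cardE card_gt0.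
have [e sum_c] := osum_nonempty (prod_op op) (fun=> c) enum_gt0.
exists alpha; split=> //; exists (op s e.1, e.2) => j.
have [p sum_M] := osum_nonempty (prod_op op) (M^~ j) enum_gt0.
rewrite col_subsumE sum_M; apply/(AP_pairsE opA opC) => k kl.
have := As (enum_rank ((j, Ordinal (kl : k < l.+1)) : T)).
rewrite col_subsumE (eq_osum _ (G := fun i => ap_term op (prod_op op c (M i j)) k));
  last by move=> i; rewrite /N enum_rankK.
rewrite (osum_morph _ _ (ap_termD opA opC k)).
rewrite (osumD (prod_opA opA) (prod_opC opC) sum_c sum_M) /= (ap_term_shift opA opC).
by rewrite /prod_op /= opA.
Qed.
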